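(* Let $\mathcal{G}$ be a graph class and let $G$ be a graph with $G\notin\mathcal{G}$. Let $\mathcal{M}$ be a $\mathcal{G}$-modular partition of $G$ and let $\mathcal{M}^*$ be the maximal modular partition of $G$. Then: (i) if $G$ or $\overline{G}$ is disconnected, then for any $M\in\mathcal{M}$ and $M'\in\mathcal{M}^*$, $M\cap M'\in\{M,M',\emptyset\}$; (ii) if $G$ and $\overline{G}$ are both connected, then for every $M\in\mathcal{M}$ there is $M'\in\mathcal{M}^*$ with $M\subseteq M'$.
   Context: A graph class is a (possibly infinite) set of graphs containing at least one non-empty graph. A module of $G=(V,E)$ is a set $M\subseteq V$ such that each $v\in V\setminus M$ is adjacent to all or to none of the vertices of $M$. A module $M$ is strong if for every module $M'$, either $M\subseteq M'$, $M'\subseteq M$ or $M\cap M'=\emptyset$; it is maximal if $M\subsetneq V$ and no module $M'$ satisfies $M\subsetneq M'\subsetneq V$. The maximal modular partition of $G$ is the unique partition of $V$ into maximal strong modules. A module $M$ is a $\mathcal{G}$-module if $G[M]\in\mathcal{G}$; a $\mathcal{G}$-modular partition of $G$ is a partition of $V(G)$ into $\mathcal{G}$-modules. $\overline{G}$ is the complement of $G$. *)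

From mathcomp Require Import all_boot fingraph.
Set Implicit Arguments. Unset Strict Implicit. Unset Printing Implicit Defensive.

Definition simple_graph (T : finType) (e : rel T) : Prop :=
  symmetric e /\ irreflexive e.

Record graph_class := GraphClass {
  gc_mem : forall T : finType, rel T -> Prop;
  gc_iso : forall (T U : finType) (e : rel T) (f : rel U) (h : T -> U),
      bijective h -> (forall x y, f (h x) (h y) = e x y) ->
      gc_mem e -> gc_mem f;
  gc_nonempty : exists (T : finType) (e : rel T),
      simple_graph e /\ 0 < #|T| /\ gc_mem e
}.
Arguments gc_mem g {T} _.

Definition compl_graph (T : finType) (e : rel T) : rel T :=
  fun x y => (x != y) && ~~ e x y.

Definition connected_graph (T : finType) (e : rel T) : Prop :=
  forall x y : T, connect e x y.

Definition induced (T : finType) (e : rel T) (M : {set T})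
  : rel {x : T | x \in M} := fun x y => e (val x) (val y).

Definition is_module (T : finType) (e : rel T) (M : {set T}) : Prop :=
  forall v, v \notin M -> (forall x, x \in M -> e v x) \/ (forall x, x \in M -> ~~ e v x).

Definition strong_module (T : finType) (e : rel T) (M : {set T}) : Prop :=
  is_module e M /\
  forall M', is_module e M' -> M \subset M' \/ M' \subset M \/ [disjoint M & M'].

Definition maximal_strong_module (T : finType) (e : rel T) (M : {set T}) : Prop :=
  strong_module e M /\ M \proper [set: T] /\
  forall M', strong_module e M' -> M \proper M' -> ~ (M' \proper [set: T]).

Definition maximal_modular_partition (T : finType) (e : rel T)
  (P : {set {set T}}) : Prop :=
  partition P [set: T] /\ forall M, M \in P -> maximal_strong_module e M.

Definition class_module (C : graph_class) (T : finType) (e : rel T) (M : {set T})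
  : Prop := is_module e M /\ gc_mem C (@induced T e M).

Definition class_modular_partition (C : graph_class) (T : finType) (e : rel T)
  (P : {set {set T}}) : Prop :=
  partition P [set: T] /\ forall M, M \in P -> class_module C e M.

From mathcomp Require Import all_boot.

Set Implicit Arguments.
Unset Strict Implicit.
Unset Printing Implicit Defensive.

(* (i) is immediate from strongness of the blocks of the maximal modular
   partition.  For (ii), a class module M is proper (otherwise G = G[M] would
   lie in the class), so it extends to a maximal proper module W.  When G and
   its complement are connected, W is strong: an overlapping module N would
   give a module W ∪ N = V, and then every vertex of V \ W = N \ W relates
   to all of W as one fixed c ∈ N \ W relates to one fixed a ∈ W \ N, so
   the cut (W, V \ W) disconnects G or its complement.  A strong proper
   module meeting a block of the maximal modular partition lies inside it,
   so M ⊆ W lies in a block. *)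

Section Modules.
Variables (T : finType) (e : rel T).

Definition moduleb (M : {set T}) : bool :=
  [forall v in ~: M, [forall x in M, e v x] || [forall x in M, ~~ e v x]].

Lemma moduleP M : reflect (is_module e M) (moduleb M).
Proof.
apply: (iffP forall_inP) => HM v; rewrite ?inE => vM.
  by move: (HM v); rewrite inE => /(_ vM) /orP [] /forall_inP; [left | right].
by apply/orP; case: (HM v vM) => Hv; [left | right]; apply/forall_inP.
Qed.

Definition proper_module : pred {set T} :=
  [pred W | moduleb W & W \proper [set: T]].

Lemma module_rel_eq M v x y :
  is_module e M -> v \notin M -> x \in M -> y \in M -> e v x = e v y.
Proof.
move=> HM vM xM yM; case: (HM v vM) => Hv; first by rewrite !Hv.
by rewrite (negbTE (Hv x xM)) (negbTE (Hv y yM)).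
Qed.

Lemma module_setU U N b :
  is_module e U -> is_module e N -> b \in U :&: N -> is_module e (U :|: N).
Proof.
move=> HU HN; rewrite inE => /andP [bU bN] v; rewrite inE negb_or => /andP [vU vN].
case: (HU v vU) => H1; case: (HN v vN) => H2.
- by left => x; rewrite inE => /orP [] ?; auto.
- by have := H1 b bU; rewrite (negbTE (H2 b bN)).
- by have := H2 b bN; rewrite (negbTE (H1 b bU)).
- by right => x; rewrite inE => /orP [] ?; auto.
Qed.

Lemma not_connected_cut (r : rel T) (S : {set T}) x y :
  x \in S -> y \notin S -> (forall u v, u \in S -> v \notin S -> ~~ r u v) ->
  ~ connected_graph r.
Proof.
move=> xS yS cut /(_ x y) /connectP [p pth yE]; rewrite {y}yE in yS.
elim: p x xS pth yS => [|z p IH] x xS /=; first by rewrite xS.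
case/andP=> rxz; apply: IH; apply: contraTT rxz; exact: cut.
Qed.

Lemma covering_modules_not_connected U N a c :
  symmetric e -> is_module e U -> is_module e N -> U :|: N = [set: T] ->
  a \in U -> a \notin N -> c \in N -> c \notin U ->
  ~ connected_graph e \/ ~ connected_graph (compl_graph e).
Proof.
move=> sym HU HN UN aU aN cN cU.
have cut y x : y \notin U -> x \in U -> e y x = e c a.
  move=> yU xU; have yN : y \in N by move: (in_setT y); rewrite -UN inE (negbTE yU).
  by rewrite (module_rel_eq HU yU xU aU) sym (module_rel_eq HN aN yN cN) sym.
case eca: (e c a); [right | left];
  apply: (@not_connected_cut _ (~: U) c a); rewrite ?inE ?cU ?aU // => y x;
  rewrite !inE negbK => yU xU; rewrite /compl_graph cut // eca ?andbF //.
Qed.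

Lemma maxset_proper_module_strong U :
  symmetric e -> connected_graph e -> connected_graph (compl_graph e) ->
  maxset proper_module U -> strong_module e U.
Proof.
move=> sym conn conn' /maxsetP [/andP [/moduleP HU Up] Umax]; split=> // N HN.
have [UN | /subsetPn [a aU aN]] := boolP (U \subset N); first by left.
have [NU | /subsetPn [c cN cU]] := boolP (N \subset U); first by right; left.
have [|] := boolP [disjoint U & N]; first by right; right.
rewrite -setI_eq0 => /set0Pn [b bUN]; exfalso.
have HUN := module_setU HU HN bUN.
have UNT : U :|: N = [set: T].
  apply/eqP; rewrite eqEproper subsetT /=; apply/negP => UNp.
  have /setUidPl NsubU : U :|: N = U.
    by apply: Umax (subsetUl U N); apply/andP; split=> //; apply/moduleP.
  by rewrite (subsetP NsubU c cN) in cU.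
by have [] := covering_modules_not_connected sym HU HN UNT aU aN cN cU.
Qed.

Lemma strong_module_sub_maximal B W x :
  maximal_strong_module e B -> strong_module e W -> W \proper [set: T] ->
  x \in B -> x \in W -> W \subset B.
Proof.
move=> [[_ Bstrong] [_ Bmax]] Wstrong Wp xB xW.
case: (Bstrong W (proj1 Wstrong)) => [BW | [// | dBW]]; last first.
  by rewrite (disjointFr dBW xB) in xW.
case: (eqVneq B W) => [<- // | neqBW]; exfalso.
by apply: (Bmax W) => //; rewrite properEneq neqBW.
Qed.

Lemma module_sub_maximal_modular_block Pstar M x :
  symmetric e -> connected_graph e -> connected_graph (compl_graph e) ->
  maximal_modular_partition e Pstar ->
  is_module e M -> M \proper [set: T] -> x \in M ->
  exists2 B, B \in Pstar & M \subset B.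
Proof.
move=> sym conn conn' [partP maxP] HM Mp xM.
have [W maxW MW] : {W | maxset proper_module W & M \subset W}.
  by apply: maxset_exists; apply/andP; split=> //; apply/moduleP.
have [_ Wp] := andP (maxsetp maxW).
have xcover : x \in cover Pstar by rewrite (cover_partition partP) inE.
exists (pblock Pstar x); first exact: pblock_mem.
apply: subset_trans MW (strong_module_sub_maximal _ _ Wp _ (subsetP MW x xM)).
- exact/maxP/pblock_mem.
- exact: maxset_proper_module_strong.
- by rewrite mem_pblock.
Qed.

Lemma strong_module_setI M M' :
  strong_module e M' -> is_module e M ->
  M :&: M' = M \/ M :&: M' = M' \/ M :&: M' = set0.
Proof.
case=> _ strongM' HM; case: (strongM' M HM) => [sub | [sub | dis]].
- by right; left; apply/setIidPr.
- by left; apply/setIidPl.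
- by right; right; apply: disjoint_setI0; rewrite disjoint_sym.
Qed.

End Modules.

Lemma class_module_proper (C : graph_class) (T : finType) (e : rel T) M :
  ~ gc_mem C e -> class_module C e M -> M \proper [set: T].
Proof.
move=> notCe [_ CM]; rewrite properT; apply/eqP => MT; subst M; apply: notCe.
apply: (@gc_iso C _ T _ e val _ _ CM) => //.
by exists (fun y => exist _ y (in_setT y)) => [z|y] //; apply: val_inj.
Qed.

Theorem lemma3 (C : graph_class) (T : finType) (e : rel T)
  (He : simple_graph e) (HG : ~ gc_mem C e)
  (P Pstar : {set {set T}})
  (HP : class_modular_partition C e P)
  (HPstar : maximal_modular_partition e Pstar) :
  ((~ connected_graph e \/ ~ connected_graph (compl_graph e)) ->
     forall M M', M \in P -> M' \in Pstar ->
       M :&: M' = M \/ M :&: M' = M' \/ M :&: M' = set0) /\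
  ((connected_graph e /\ connected_graph (compl_graph e)) ->
     forall M, M \in P -> exists2 M', M' \in Pstar & M \subset M').
Proof.
case: HP => partP classP; split.
  move=> _ M M' MP M'Pstar; have [strongM' _] := proj2 HPstar M' M'Pstar.
  exact: strong_module_setI strongM' (proj1 (classP M MP)).
move=> [conn conn'] M MP; have classM := classP M MP.
have /set0Pn [x xM] := partition_neq0 partP MP.
exact: (module_sub_maximal_modular_block (proj1 He) conn conn' HPstar
          (proj1 classM) (class_module_proper HG classM) xM).
Qed.
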